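(* Let $\Sigma_\iota[\lambda]:=\{\mathbf{x}\in \mathbb{Z}_\iota(\lambda)\mid \varphi(\mathbf{x})\ge 0 \text{ for all } \varphi\in\Xi_\iota[\lambda]\}$. Then $\Sigma_\iota[\lambda]$ is a subcrystal of $\mathrm{Im}(\Psi^{\lambda}_{\iota})$; that is, $\Sigma_\iota[\lambda]\subseteq \mathrm{Im}(\Psi^{\lambda}_{\iota})$ and for every $\mathbf{x}\in\Sigma_\iota[\lambda]$ and $i\in\{1,2\}$, each of $\tilde e_i\mathbf{x}$, $\tilde f_i\mathbf{x}$ is either $\mathbf{0}$ or lies in $\Sigma_\iota[\lambda]$.
   Context: Let $a_1,a_2\in\mathbb{Z}_{\ge1}$ with $a_1a_2>4$, let $A=\begin{pmatrix}2&-a_1\\-a_2&2\end{pmatrix}$, $I=\{1,2\}$, and let $\mathfrak g=\mathfrak g(A)$ be the associated Kac–Moody algebra with simple roots $\alpha_1,\alpha_2$, simple coroots $\alpha_1^\vee,\alpha_2^\vee$ (so $\langle\alpha_2,\alpha_1^\vee\rangle=-a_1$, $\langle\alpha_1,\alpha_2^\vee\rangle=-a_2$), fundamental weights $\Lambda_1,\Lambda_2$, weight lattice $P=\mathbb{Z}\Lambda_1\oplus\mathbb{Z}\Lambda_2$. Crystals are Kashiwara crystals with operators $\tilde e_i,\tilde f_i$ (taking values in the crystal or an extra element $\mathbf 0$), $\varepsilon_i,\varphi_i,\mathrm{wt}$. For $k\in\mathbb{Z}$ put $i_k=1$ if $k$ is odd and $i_k=2$ if $k$ is even; write $a_{i_k}$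 for $a_1$ or $a_2$ accordingly. Crystal $\mathbb{Z}^{+\infty}_{\ge0}$: elements $\hat x=(\dots,x_2,x_1)$, $x_k\in\mathbb{Z}_{\ge0}$, $x_k=0$ for $k\gg0$. For $k\ge1$ let $\sigma^+_k(\hat x)=x_k+\sum_{j>k}\langle\alpha_{i_j},\alpha_{i_k}^\vee\rangle x_j$, $\sigma^+_{(i)}=\max\{\sigma^+_k: k\ge1, i_k=i\}$, $M^+_{(i)}$ the set of such $k$ attaining the max. Then $\mathrm{wt}(\hat x)=-\sum_j x_j\alpha_{i_j}$, $\varepsilon_i=\sigma^+_{(i)}$, $\varphi_i=\varepsilon_i+\langle\mathrm{wt},\alpha_i^\vee\rangle$; $\tilde e_i$ subtracts $1$ from $x_{\max M^+_{(i)}}$ if $\sigma^+_{(i)}>0$ and gives $\mathbf 0$ otherwise; $\tilde f_i$ adds $1$ to $x_{\min M^+_{(i)}}$. Crystal $\mathbb{Z}^{-\infty}_{\le0}$: elements $\hat x=(x_0,x_{-1},\dots)$, $x_k\in\mathbb{Z}_{\le0}$, $x_k=0$ for $k\ll0$; for $k\le0$, $\sigma^-_k=-x_k-\sum_{j<k}\langle\alpha_{i_j},\alpha_{i_k}^\vee\rangle x_j$, $\sigma^-_{(i)}$ the max over $k\le0$ with $i_k=i$, $M^-_{(i)}$ the maximizers; $\mathrm{wt}=-\sum_j x_j\alpha_{i_j}$, $\varphi_i=\sigma^-_{(i)}$, $\varepsilon_i=\varphi_i-\langle\mathrm{wt},\alpha_i^\vee\rangle$; $\tilde e_i$ subtracts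 $1$ from $x_{\max M^-_{(i)}}$; $\tilde f_i$ adds $1$ to $x_{\min M^-_{(i)}}$ if $\sigma^-_{(i)}>0$, and is $\mathbf 0$ otherwise. For $\mu\in P$, $\mathbb{Z}_\iota(\mu)=\mathbb{Z}^{+\infty}_{\ge0}\otimes\mathcal T_\mu\otimes\mathbb{Z}^{-\infty}_{\le0}$, whose elements are $\mathbf x=(\dots,x_2,x_1)\otimes t_\mu\otimes(x_0,x_{-1},\dots)$, with: $\mathrm{wt}(\mathbf x)=\mu-\sum_{j\in\mathbb Z}x_j\alpha_{i_j}$; $\sigma_k(\mathbf x)=\sigma^+_k$ for $k\ge1$, $\sigma_k(\mathbf x)=\sigma^-_k-\langle\mathrm{wt}(\mathbf x),\alpha_{i_k}^\vee\rangle$ for $k\le0$; $\sigma_{(i)}=\max\{\sigma_k:i_k=i\}$, $M_{(i)}$ the maximizers; $\varepsilon_i=\sigma_{(i)}$, $\varphi_i=\varepsilon_i+\langle\mathrm{wt},\alpha_i^\vee\rangle$; if $\varepsilon_i>0$, $\tilde e_i$ subtracts $1$ from $x_{\max M_{(i)}}$, else $\tilde e_i\mathbf x=\mathbf 0$; if $\varphi_i>0$, $\tilde f_i$ adds $1$ to $x_{\min M_{(i)}}$, else $\tilde f_i\mathbf x=\mathbf 0$. Let $\mathcal B(\infty)$, $\mathcal B(-\infty)$ be the crystal bases of $U_q^-(\mathfrak g)$, $U_q^+(\mathfrak g)$, and $\Psi^+:\mathcal B(\infty)\hookrightarrow\mathbb{Z}^{+\infty}_{\ge0}$, $\Psi^-:\mathcal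 B(-\infty)\hookrightarrow\mathbb{Z}^{-\infty}_{\le0}$ the Nakashima–Zelevinsky embeddings of crystals for these sequences (sending the highest/lowest elements to the zero sequences). Set $\Psi^\mu_\iota=\Psi^+\otimes\mathrm{id}\otimes\Psi^-$, so $\mathrm{Im}(\Psi^\mu_\iota)=\mathrm{Im}(\Psi^+)\otimes t_\mu\otimes\mathrm{Im}(\Psi^-)\subseteq\mathbb Z_\iota(\mu)$. Put $\alpha=\frac{a_1a_2+\sqrt{a_1^2a_2^2-4a_1a_2}}{2a_2}$, $\beta=\frac{a_1a_2+\sqrt{a_1^2a_2^2-4a_1a_2}}{2a_1}$, $\gamma_k=\alpha$ for $k$ even and $\gamma_k=\beta$ for $k$ odd. Fix $\lambda=k_1\Lambda_1-k_2\Lambda_2$ with $k_1,k_2\in\mathbb Z_{>0}$ such that: if $a_1,a_2\ge2$, either $k_2\le k_1<(a_1-1)k_2$ or $k_1<k_2\le(a_2-1)k_1$; if $a_1=1$, $2k_1\le k_2\le(a_2-2)k_1$; if $a_2=1$, $2k_2\le k_1\le(a_1-2)k_2$. Define $p_0=k_2$, $p_1=k_1$, and for $m\ge0$: $p_{m+2}=a_2p_{m+1}-p_m$ ($m$ even), $p_{m+2}=a_1p_{m+1}-p_m$ ($m$ odd); for $m<0$: $p_m=a_2p_{m+1}-p_{m+2}$ ($m$ even), $p_m=a_1p_{m+1}-p_{m+2}$ ($m$ odd). For $k\in\mathbb Z$ let $\zeta_k$ be the linear function $\mathbf x\mapsto x_k$. Let $\Xi_\iota[\lambda]=\{\gamma_0p_0+\gamma_0\zeta_0-\zeta_1,\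 \gamma_1p_1+\zeta_0-\gamma_1\zeta_1\}\cup\{p_k-\zeta_k,\ \gamma_k\zeta_k-\zeta_{k+1},\ \gamma_{k+1}p_{k+1}-p_k+\zeta_k-\gamma_{k+1}\zeta_{k+1}\mid k\ge1\}\cup\{p_k+\zeta_k,\ \zeta_{k-1}-\gamma_k\zeta_k,\ \gamma_{k-1}p_{k-1}-p_k+\gamma_{k-1}\zeta_{k-1}-\zeta_k\mid k\le0\}$. *)

From Stdlib Require Import ZArith List Reals.
Import ListNotations.

Open Scope Z_scope.

Inductive idx := I1 | I2.

Definition idx_eqb (i j : idx) : bool :=
  match i, j with I1, I1 | I2, I2 => true | _, _ => false end.

Definition ik (k : Z) : idx := if Z.odd k then I1 else I2.

(** cartan a1 a2 j i = <alpha_j, alpha_i^vee> for A = [[2,-a1],[-a2,2]]. *)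
Definition cartan (a1 a2 : Z) (j i : idx) : Z :=
  match j, i with
  | I1, I1 => 2 | I2, I2 => 2
  | I2, I1 => - a1
  | I1, I2 => - a2
  end.

Definition zrange (lo hi : Z) : list Z :=
  map (fun n => lo + Z.of_nat n) (seq 0 (Z.to_nat (hi - lo + 1))).

Definition zsum (lo hi : Z) (f : Z -> Z) : Z :=
  fold_right Z.add 0 (map f (zrange lo hi)).

Definition lmax (l : list Z) (s : Z -> Z) : Z :=
  match l with
  | [] => 0
  | k :: l' => fold_right (fun j acc => Z.max (s j) acc) (s k) l'
  end.

Definition argmin_of (l : list Z) (s : Z -> Z) (m : Z) (dflt : Z) : Z :=
  fold_right (fun j acc => if s j =? m then Z.min j acc else acc) dflt l.

Definition argmax_of (l : list Z) (s : Z -> Z) (m : Z) (dflt : Z) : Z :=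
  fold_right (fun j acc => if s j =? m then Z.max j acc else acc) dflt l.

Definition par_filter (i : idx) (l : list Z) : list Z :=
  filter (fun k => idx_eqb (ik k) i) l.

Definition update (x : Z -> Z) (k0 d : Z) : Z -> Z :=
  fun k => if k =? k0 then x k + d else x k.

(** The integer N is a bound on
    the support; all the operators below are independent of the choice of a
    valid N (the window [-(N+2), N+2] contains all relevant indices). *)

Definition supp_plus (N : Z) (x : Z -> Z) : Prop :=
  forall k, (k < 1 \/ N < k) -> x k = 0.

Definition sigma_plus (a1 a2 N : Z) (x : Z -> Z) (k : Z) : Z :=
  x k + zsum (k + 1) N (fun j => cartan a1 a2 (ik j) (ik k) * x j).

Definition fplus (a1 a2 : Z) (i : idx) (N : Z) (x : Z -> Z) : Z -> Z :=
  let l := par_filter i (zrange 1 (N + 2)) in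
  let s := sigma_plus a1 a2 N x in
  update x (argmin_of l s (lmax l s) (N + 3)) 1.

(** Im(Psi^+): the image of B(infty) = the set generated from the zero
    sequence by the operators f~_i. *)
Inductive ImPlus (a1 a2 : Z) : (Z -> Z) -> Prop :=
| ImPlus0 : ImPlus a1 a2 (fun _ => 0)
| ImPlusF : forall (x : Z -> Z) (N : Z) (i : idx),
    ImPlus a1 a2 x -> 0 <= N -> supp_plus N x -> ImPlus a1 a2 (fplus a1 a2 i N x).

Definition supp_minus (N : Z) (x : Z -> Z) : Prop :=
  forall k, (k < - N \/ 0 < k) -> x k = 0.

Definition sigma_minus (a1 a2 N : Z) (x : Z -> Z) (k : Z) : Z :=
  - x k - zsum (- N) (k - 1) (fun j => cartan a1 a2 (ik j) (ik k) * x j).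

Definition eminus (a1 a2 : Z) (i : idx) (N : Z) (x : Z -> Z) : Z -> Z :=
  let l := par_filter i (zrange (- (N + 2)) 0) in
  let s := sigma_minus a1 a2 N x in
  update x (argmax_of l s (lmax l s) (- (N + 3))) (-1).

(** Im(Psi^-): the image of B(-infty) = the set generated from the zero
    sequence by the operators e~_i. *)
Inductive ImMinus (a1 a2 : Z) : (Z -> Z) -> Prop :=
| ImMinus0 : ImMinus a1 a2 (fun _ => 0)
| ImMinusE : forall (x : Z -> Z) (N : Z) (i : idx),
    ImMinus a1 a2 x -> 0 <= N -> supp_minus N x -> ImMinus a1 a2 (eminus a1 a2 i N x).

(** An element (...,x_2,x_1) (x) t_mu (x) (x_0,x_{-1},...) is a function
    x : Z -> Z; mu is given by its pairings mu i = <mu, alpha_i^vee>. *)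
Definition supported (N : Z) (x : Z -> Z) : Prop :=
  forall k, (k < - N \/ N < k) -> x k = 0.

Definition in_Ziota (x : Z -> Z) : Prop :=
  (forall k, 1 <= k -> 0 <= x k) /\ (forall k, k <= 0 -> x k <= 0) /\
  exists N, supported N x.

(** <wt(x), alpha_i^vee> with wt(x) = mu - sum_j x_j alpha_{i_j}. *)
Definition wt_pair (a1 a2 : Z) (mu : idx -> Z) (N : Z) (x : Z -> Z) (i : idx) : Z :=
  mu i - zsum (- N) N (fun j => x j * cartan a1 a2 (ik j) i).

Definition sigmaZ (a1 a2 : Z) (mu : idx -> Z) (N : Z) (x : Z -> Z) (k : Z) : Z :=
  if 1 <=? k then sigma_plus a1 a2 N x k
  else sigma_minus a1 a2 N x k - wt_pair a1 a2 mu N x (ik k).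

Definition windowZ (i : idx) (N : Z) : list Z := par_filter i (zrange (- (N + 2)) (N + 2)).

Definition epsZ (a1 a2 : Z) (mu : idx -> Z) (i : idx) (N : Z) (x : Z -> Z) : Z :=
  lmax (windowZ i N) (sigmaZ a1 a2 mu N x).

Definition phiZ (a1 a2 : Z) (mu : idx -> Z) (i : idx) (N : Z) (x : Z -> Z) : Z :=
  epsZ a1 a2 mu i N x + wt_pair a1 a2 mu N x i.

(** e~_i, f~_i on Z_iota(mu); None stands for the extra element 0. *)
Definition etildeZ (a1 a2 : Z) (mu : idx -> Z) (i : idx) (N : Z) (x : Z -> Z)
  : option (Z -> Z) :=
  let m := epsZ a1 a2 mu i N x in
  if 0 <? m then
    Some (update x (argmax_of (windowZ i N) (sigmaZ a1 a2 mu N x) m (- (N + 3))) (-1))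
  else None.

Definition ftildeZ (a1 a2 : Z) (mu : idx -> Z) (i : idx) (N : Z) (x : Z -> Z)
  : option (Z -> Z) :=
  let m := epsZ a1 a2 mu i N x in
  if 0 <? phiZ a1 a2 mu i N x then
    Some (update x (argmin_of (windowZ i N) (sigmaZ a1 a2 mu N x) m (N + 3)) 1)
  else None.

(** Im(Psi^mu_iota) = Im(Psi^+) (x) t_mu (x) Im(Psi^-). *)
Definition ImPsi (a1 a2 : Z) (x : Z -> Z) : Prop :=
  (exists y, ImPlus a1 a2 y /\ forall k, 1 <= k -> x k = y k) /\
  (exists z, ImMinus a1 a2 z /\ forall k, k <= 0 -> x k = z k).

Definition lam (k1 k2 : Z) (i : idx) : Z :=
  match i with I1 => k1 | I2 => - k2 end.

Definition cpar (a1 a2 m : Z) : Z := if Z.even m then a2 else a1.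

(** pp n = (p_n, p_{n+1}) for n >= 0 *)
Fixpoint pp (a1 a2 k1 k2 : Z) (n : nat) : Z * Z :=
  match n with
  | O => (k2, k1)
  | S n' => let (u, v) := pp a1 a2 k1 k2 n' in
            (v, cpar a1 a2 (Z.of_nat n') * v - u)
  end.

(** pn n = (p_{-n}, p_{-n+1}) for n >= 0 *)
Fixpoint pn (a1 a2 k1 k2 : Z) (n : nat) : Z * Z :=
  match n with
  | O => (k2, k1)
  | S n' => let (u, v) := pn a1 a2 k1 k2 n' in
            (cpar a1 a2 (- Z.of_nat n) * u - v, u)
  end.

Definition pseq (a1 a2 k1 k2 : Z) (m : Z) : Z :=
  if 0 <=? m then fst (pp a1 a2 k1 k2 (Z.to_nat m))
  else fst (pn a1 a2 k1 k2 (Z.to_nat (- m))).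

Open Scope R_scope.

Definition alphaR (a1 a2 : Z) : R :=
  (IZR (a1 * a2) + sqrt (IZR (a1 * a1 * a2 * a2 - 4 * a1 * a2))) / (2 * IZR a2).
Definition betaR (a1 a2 : Z) : R :=
  (IZR (a1 * a2) + sqrt (IZR (a1 * a1 * a2 * a2 - 4 * a1 * a2))) / (2 * IZR a1).
Definition gammaR (a1 a2 : Z) (k : Z) : R :=
  if Z.even k then alphaR a1 a2 else betaR a1 a2.

Definition Xi_nonneg (a1 a2 k1 k2 : Z) (x : Z -> Z) : Prop :=
  let p m := IZR (pseq a1 a2 k1 k2 m) in
  let g := gammaR a1 a2 in
  let z k := IZR (x k) in
  0 <= g 0%Z * p 0%Z + g 0%Z * z 0%Z - z 1%Z /\
  0 <= g 1%Z * p 1%Z + z 0%Z - g 1%Z * z 1%Z /\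
  (forall k : Z, (1 <= k)%Z ->
     0 <= p k - z k /\
     0 <= g k * z k - z (k + 1)%Z /\
     0 <= g (k + 1)%Z * p (k + 1)%Z - p k + z k - g (k + 1)%Z * z (k + 1)%Z) /\
  (forall k : Z, (k <= 0)%Z ->
     0 <= p k + z k /\
     0 <= z (k - 1)%Z - g k * z k /\
     0 <= g (k - 1)%Z * p (k - 1)%Z - p k + g (k - 1)%Z * z (k - 1)%Z - z k).

Definition SigmaSet (a1 a2 k1 k2 : Z) (x : Z -> Z) : Prop :=
  in_Ziota x /\ Xi_nonneg a1 a2 k1 k2 x.

Close Scope R_scope.

Definition standing_hyps (a1 a2 k1 k2 : Z) : Prop :=
  1 <= a1 /\ 1 <= a2 /\ 4 < a1 * a2 /\ 0 < k1 /\ 0 < k2 /\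
  (2 <= a1 -> 2 <= a2 ->
     (k2 <= k1 /\ k1 < (a1 - 1) * k2) \/ (k1 < k2 /\ k2 <= (a2 - 1) * k1)) /\
  (a1 = 1 -> 2 * k1 <= k2 /\ k2 <= (a2 - 2) * k1) /\
  (a2 = 1 -> 2 * k2 <= k1 /\ k1 <= (a1 - 2) * k2).

(* Put u_k = x_k + [k <= 0] p_k and v_k = x_k - [k >= 1] p_k.  In these coordinates,
   membership in Sigma_iota[lambda] says that u >= 0 with gamma_k u_k >= u_{k+1} and that v <= 0 with
   v_k >= gamma_{k+1} v_{k+1}.  Since p_k - c_k p_{k+1} + p_{k+2} = 0 (c_k = a2 for k even,
   a1 for k odd), u and v have the same second difference D_k = w_k - c_k w_{k+1} + w_{k+2},
   and it equals sigma_k - sigma_{k+2}: the weight term of sigma_k for k <= 0 accounts exactly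
   for the truncation of p at 0.  As c_k = gamma_{k+1} + 1/gamma_k, we have
   gamma_k D_k = A_k - gamma_k A_{k+1} with A_k = gamma_k u_k - u_{k+1}, and similarly for v.
   Now e~_i acts at the last maximizer k of sigma among the indices of parity i, so
   D_k = sigma_k - sigma_{k+2} >= 1, whence A_k >= gamma_k: lowering x_k by one keeps every
   inequality.  Symmetrically f~_i acts at the first maximizer, where D_{k-2} <= -1.
   The two halves of x satisfy one-sided versions of the same cone conditions, and the same
   step, read backwards, writes each nonzero half as f~ (resp. e~) applied to a smaller element
   of the cone; by induction the halves lie in the images of Psi^+ and Psi^-. *)

From Stdlib Require Import ZArith List Reals Lia Lra.
From Stdlib Require Import FunctionalExtensionality Classical.
Import ListNotations.

Open Scope Z_scope.

Lemma zsum_nil lo hi f : hi < lo -> zsum lo hi f = 0.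
Proof.
  intros H. unfold zsum, zrange.
  replace (Z.to_nat (hi - lo + 1)) with 0%nat by lia. reflexivity.
Qed.

Lemma zsum_cons lo hi f : lo <= hi -> zsum lo hi f = f lo + zsum (lo + 1) hi f.
Proof.
  intros H. unfold zsum, zrange.
  replace (Z.to_nat (hi - lo + 1)) with (S (Z.to_nat (hi - (lo + 1) + 1))) by lia.
  simpl. rewrite Z.add_0_r, <- seq_shift, !map_map. f_equal. f_equal.
  apply map_ext. intros a. f_equal. lia.
Qed.

Lemma zsum_ind (P : Z -> Z -> Prop) :
  (forall lo hi, hi < lo -> P lo hi) ->
  (forall lo hi, lo <= hi -> P (lo + 1) hi -> P lo hi) ->
  forall lo hi, P lo hi.
Proof.
  intros Hnil Hcons lo hi.
  remember (Z.to_nat (hi - lo + 1)) as n eqn:Hn. revert lo Hn.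
  induction n; intros lo Hn.
  - apply Hnil. lia.
  - apply Hcons; [lia|]. apply IHn. lia.
Qed.

Lemma zsum_ext lo hi f g :
  (forall j, lo <= j <= hi -> f j = g j) -> zsum lo hi f = zsum lo hi g.
Proof.
  revert lo hi.
  apply (zsum_ind (fun lo hi =>
    (forall j, lo <= j <= hi -> f j = g j) -> zsum lo hi f = zsum lo hi g)).
  - intros. rewrite !zsum_nil; auto.
  - intros lo hi H IH Hfg.
    rewrite !(zsum_cons lo hi) by auto. rewrite Hfg, IH by (lia || (intros; apply Hfg; lia)).
    reflexivity.
Qed.

Lemma zsum_eq0 lo hi f : (forall j, lo <= j <= hi -> f j = 0) -> zsum lo hi f = 0.
Proof.
  intros Hf. rewrite (zsum_ext lo hi f (fun _ => 0)) by auto. clear Hf.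
  revert lo hi. apply zsum_ind; intros.
  - apply zsum_nil; auto.
  - rewrite zsum_cons; auto.
Qed.

Lemma zsum_split lo b hi f :
  lo <= b + 1 -> b <= hi -> zsum lo hi f = zsum lo b f + zsum (b + 1) hi f.
Proof.
  intros H1 H2. remember (Z.to_nat (b + 1 - lo)) as n eqn:Hn. revert lo H1 Hn.
  induction n; intros lo H1 Hn.
  - replace lo with (b + 1) by lia. rewrite (zsum_nil (b + 1) b) by lia. lia.
  - rewrite (zsum_cons lo hi), (zsum_cons lo b), (IHn (lo + 1)) by lia. lia.
Qed.

Lemma zsum_add lo hi f g :
  zsum lo hi (fun j => f j + g j) = zsum lo hi f + zsum lo hi g.
Proof.
  revert lo hi. apply zsum_ind; intros lo hi H.
  - rewrite !zsum_nil; auto.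
  - intros IH. rewrite !(zsum_cons lo hi), IH by auto. lia.
Qed.

Lemma zsum_delta lo hi k d : lo <= k <= hi ->
  zsum lo hi (fun j => if j =? k then d else 0) = d.
Proof.
  intros Hk. rewrite (zsum_split lo (k - 1) hi), zsum_eq0, (zsum_cons (k - 1 + 1)), zsum_eq0 by
    (lia || (intros j Hj; destruct (Z.eqb_spec j k); lia)).
  replace (k - 1 + 1) with k by ring. rewrite Z.eqb_refl. lia.
Qed.

Lemma zsum_nonneg lo hi f : (forall j, 0 <= f j) -> 0 <= zsum lo hi f.
Proof.
  intros Hf. revert lo hi. apply zsum_ind; intros lo hi H.
  - rewrite zsum_nil; lia.
  - intros IH. rewrite zsum_cons by auto. specialize (Hf lo). lia.
Qed.

Lemma zsum_nonpos lo hi f : (forall j, f j <= 0) -> zsum lo hi f <= 0.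
Proof.
  intros Hf. revert lo hi. apply zsum_ind; intros lo hi H.
  - rewrite zsum_nil; lia.
  - intros IH. rewrite zsum_cons by auto. specialize (Hf lo). lia.
Qed.

Lemma zsum_update lo hi f k d : lo <= k <= hi ->
  zsum lo hi (update f k d) = zsum lo hi f + d.
Proof.
  intros Hk. unfold update.
  rewrite (zsum_ext lo hi _ (fun j => f j + (if j =? k then d else 0)))
    by (intros j _; destruct (j =? k); ring).
  rewrite zsum_add, zsum_delta; auto.
Qed.

Lemma in_par_filter_zrange i lo hi j :
  In j (par_filter i (zrange lo hi)) <-> lo <= j <= hi /\ ik j = i.
Proof.
  unfold par_filter, zrange. rewrite filter_In, in_map_iff.
  assert (idx_eqb (ik j) i = true <-> ik j = i) by (destruct (ik j), i; simpl; split; congruence).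
  split.
  - intros [[n [<- Hn]] Hi]. apply in_seq in Hn. split; [lia | tauto].
  - intros [Hj Hi]. split; [|tauto]. exists (Z.to_nat (j - lo)). split; [lia|]. apply in_seq. lia.
Qed.

Lemma lmax_ge l s j : In j l -> s j <= lmax l s.
Proof.
  destruct l as [|k l]; [contradiction|]. simpl. intros Hj.
  induction l as [|a l IH]; simpl in *; [destruct Hj as [<-|[]]; lia|].
  destruct Hj as [<-|[<-|Hj]];
    [specialize (IH (or_introl eq_refl)) | | specialize (IH (or_intror Hj))]; lia.
Qed.

Lemma lmax_in l s : l <> [] -> exists j, In j l /\ s j = lmax l s.
Proof.
  destruct l as [|k l]; [contradiction|]. intros _. simpl.
  induction l as [|a l [j [Hj Hs]]]; simpl; [eauto|].
  destruct (Z.max_spec (s a) (fold_right (fun j acc => Z.max (s j) acc) (s k) l))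
    as [[_ ->]|[_ ->]].
  - exists j. split; [simpl in *; tauto | auto].
  - exists a. split; [simpl; tauto | auto].
Qed.

Lemma lmax_eq l s m :
  (exists j, In j l /\ s j = m) -> (forall j, In j l -> s j <= m) -> lmax l s = m.
Proof.
  intros [j [Hj <-]] Hle.
  destruct (lmax_in l s) as [j' [Hj' Hj's]]; [intros E; subst l; destruct Hj|].
  specialize (Hle j' Hj'). specialize (lmax_ge l s j Hj). lia.
Qed.

Lemma argmax_of_spec l s m d : (forall j, In j l -> d < j) ->
  let r := argmax_of l s m d in
  (forall j, In j l -> s j = m -> j <= r) /\ (r = d \/ In r l /\ s r = m).
Proof.
  induction l as [|a l IH]; simpl; intros Hd; [tauto|].
  destruct IH as [Hle Hr]; [auto|].
  destruct (Z.eqb_spec (s a) m) as [Ha|Ha].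
  - split.
    + intros j [<-|Hj] Hs; [lia|]. specialize (Hle j Hj Hs). lia.
    + destruct (Z.max_spec a (argmax_of l s m d)) as [[_ ->]|[Hlt ->]]; [|tauto].
      destruct Hr as [Hr|Hr]; [|tauto]. specialize (Hd a (or_introl eq_refl)). lia.
  - split; [|tauto]. intros j [<-|Hj] Hs; [congruence|auto].
Qed.

Lemma argmin_of_spec l s m d : (forall j, In j l -> j < d) ->
  let r := argmin_of l s m d in
  (forall j, In j l -> s j = m -> r <= j) /\ (r = d \/ In r l /\ s r = m).
Proof.
  induction l as [|a l IH]; simpl; intros Hd; [tauto|].
  destruct IH as [Hle Hr]; [auto|].
  destruct (Z.eqb_spec (s a) m) as [Ha|Ha].
  - split.
    + intros j [<-|Hj] Hs; [lia|]. specialize (Hle j Hj Hs). lia.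
    + destruct (Z.min_spec a (argmin_of l s m d)) as [[Hlt ->]|[_ ->]]; [tauto|].
      destruct Hr as [Hr|Hr]; [|tauto]. specialize (Hd a (or_introl eq_refl)). lia.
  - split; [|tauto]. intros j [<-|Hj] Hs; [congruence|auto].
Qed.

Definition is_last_max (l : list Z) (s : Z -> Z) (k : Z) : Prop :=
  In k l /\ (forall j, In j l -> s j <= s k) /\ (forall j, In j l -> k < j -> s j < s k).

Definition is_first_max (l : list Z) (s : Z -> Z) (k : Z) : Prop :=
  In k l /\ (forall j, In j l -> s j <= s k) /\ (forall j, In j l -> j < k -> s j < s k).

Lemma argmax_of_last_max l s d : l <> [] -> (forall j, In j l -> d < j) ->
  is_last_max l s (argmax_of l s (lmax l s) d).
Proof.
  intros Hne Hd. destruct (argmax_of_spec l s (lmax l s) d Hd) as [Hle Hr].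
  destruct (lmax_in l s Hne) as [j [Hj Hs]].
  destruct Hr as [Hr|[Hr Hsr]]; [specialize (Hle j Hj Hs); specialize (Hd j Hj); lia|].
  repeat split; [auto | | ]; intros i Hi; rewrite Hsr; [apply lmax_ge; auto|].
  intros Hlt. specialize (lmax_ge l s i Hi).
  destruct (Z.eq_dec (s i) (lmax l s)) as [E|E]; [specialize (Hle i Hi E)|]; lia.
Qed.

Lemma argmin_of_first_max l s d : l <> [] -> (forall j, In j l -> j < d) ->
  is_first_max l s (argmin_of l s (lmax l s) d).
Proof.
  intros Hne Hd. destruct (argmin_of_spec l s (lmax l s) d Hd) as [Hle Hr].
  destruct (lmax_in l s Hne) as [j [Hj Hs]].
  destruct Hr as [Hr|[Hr Hsr]]; [specialize (Hle j Hj Hs); specialize (Hd j Hj); lia|].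
  repeat split; [auto | | ]; intros i Hi; rewrite Hsr; [apply lmax_ge; auto|].
  intros Hlt. specialize (lmax_ge l s i Hi).
  destruct (Z.eq_dec (s i) (lmax l s)) as [E|E]; [specialize (Hle i Hi E)|]; lia.
Qed.

Lemma last_max_lmax l s k : is_last_max l s k -> lmax l s = s k.
Proof. intros (Hk & Hle & _). apply lmax_eq; eauto. Qed.

Lemma first_max_lmax l s k : is_first_max l s k -> lmax l s = s k.
Proof. intros (Hk & Hle & _). apply lmax_eq; eauto. Qed.

Lemma last_max_argmax_of l s d k : (forall j, In j l -> d < j) -> is_last_max l s k ->
  argmax_of l s (s k) d = k.
Proof.
  intros Hd (Hk & Hle & Hlt). destruct (argmax_of_spec l s (s k) d Hd) as [Hr Hr'].
  specialize (Hr k Hk eq_refl). specialize (Hd k Hk).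
  destruct Hr' as [E|[Hin Hs]]; [lia|].
  destruct (Z.lt_total k (argmax_of l s (s k) d)) as [C|[C|C]]; auto.
  - specialize (Hlt _ Hin C). lia.
  - lia.
Qed.

Lemma first_max_argmin_of l s d k : (forall j, In j l -> j < d) -> is_first_max l s k ->
  argmin_of l s (s k) d = k.
Proof.
  intros Hd (Hk & Hle & Hlt). destruct (argmin_of_spec l s (s k) d Hd) as [Hr Hr'].
  specialize (Hr k Hk eq_refl). specialize (Hd k Hk).
  destruct Hr' as [E|[Hin Hs]]; [lia|].
  destruct (Z.lt_total k (argmin_of l s (s k) d)) as [C|[C|C]]; auto.
  - lia.
  - specialize (Hlt _ Hin C). lia.
Qed.

(* Lowering y_k in Z^{+oo}, or raising z_k in Z^{-oo}, lowers sigma by 1 at k and by 2 on one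
   side of k, turning the last maximizer into the first one or vice versa: f~ undoes e~. *)
Lemma first_max_of_lower_left l s s' k : is_last_max l s k ->
  (forall j, In j l -> s' j = s j - (if j =? k then 1 else 0) - (if j <? k then 2 else 0)) ->
  is_first_max l s' k.
Proof.
  intros (Hk & Hle & Hlt) Hs'. unfold is_first_max, is_last_max.
  rewrite (Hs' k Hk), Z.eqb_refl, Z.ltb_irrefl.
  split; [auto|split]; intros j Hj; rewrite (Hs' j Hj); specialize (Hle j Hj);
    destruct (Z.eqb_spec j k); destruct (Z.ltb_spec j k); try lia.
  specialize (Hlt j Hj). lia.
Qed.

Lemma last_max_of_lower_right l s s' k : is_first_max l s k ->
  (forall j, In j l -> s' j = s j - (if j =? k then 1 else 0) - (if k <? j then 2 else 0)) ->
  is_last_max l s' k.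
Proof.
  intros (Hk & Hle & Hlt) Hs'. unfold is_first_max, is_last_max.
  rewrite (Hs' k Hk), Z.eqb_refl, Z.ltb_irrefl.
  split; [auto|split]; intros j Hj; rewrite (Hs' j Hj); specialize (Hle j Hj);
    destruct (Z.eqb_spec j k); destruct (Z.ltb_spec k j); try lia.
  specialize (Hlt j Hj). lia.
Qed.

(** * Second differences and gamma-cones *)

Section Cones.

Variable g : Z -> R.
Variable c : Z -> Z.
Hypothesis g_pos : forall k, (0 < g k)%R.
Hypothesis g_period : forall k, g (k + 2) = g k.
Hypothesis c_g : forall k, IZR (c k) = (g (k + 1) + / g k)%R.

Definition diff2 (w : Z -> Z) (k : Z) : Z := w k - c k * w (k + 1) + w (k + 2).

Definition slopeA (w : Z -> Z) (j : Z) : R := g j * IZR (w j) - IZR (w (j + 1)).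

Definition slopeB (w : Z -> Z) (j : Z) : R := IZR (w j) - g (j + 1) * IZR (w (j + 1)).

Definition coneA (D : Z -> Prop) (w : Z -> Z) : Prop :=
  forall j, 0 <= w j /\ (D j -> 0 <= slopeA w j)%R.

Definition coneB (D : Z -> Prop) (w : Z -> Z) : Prop :=
  forall j, w j <= 0 /\ (D j -> 0 <= slopeB w j)%R.

Lemma diff2_slopeA w k : (g k * IZR (diff2 w k))%R = (slopeA w k - g k * slopeA w (k + 1))%R.
Proof.
  specialize (g_pos k). unfold diff2, slopeA.
  rewrite plus_IZR, minus_IZR, mult_IZR, c_g. replace (k + 1 + 1) with (k + 2) by ring.
  field. lra.
Qed.

Lemma diff2_slopeB w k : (g k * IZR (diff2 w k))%R = (g k * slopeB w k - slopeB w (k + 1))%R.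
Proof.
  specialize (g_pos k). unfold diff2, slopeB.
  rewrite plus_IZR, minus_IZR, mult_IZR, c_g. replace (k + 1 + 1) with (k + 2) by ring.
  rewrite g_period. field. lra.
Qed.

Lemma update_IZR w k d j :
  IZR (update w k d j) = (IZR (w j) + if j =? k then IZR d else 0)%R.
Proof. unfold update. destruct (j =? k); rewrite ?plus_IZR; lra. Qed.

Lemma slopeA_update w k d j : slopeA (update w k d) j =
  (slopeA w j + (if j =? k then g k * IZR d else 0) - (if j + 1 =? k then IZR d else 0))%R.
Proof.
  unfold slopeA. rewrite !update_IZR.
  destruct (Z.eqb_spec j k); destruct (Z.eqb_spec (j + 1) k); subst; try lia; ring.
Qed.

Lemma slopeB_update w k d j : slopeB (update w k d) j =
  (slopeB w j + (if j =? k then IZR d else 0) - (if j + 1 =? k then g k * IZR d else 0))%R.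
Proof.
  unfold slopeB. rewrite !update_IZR.
  destruct (Z.eqb_spec j k); destruct (Z.eqb_spec (j + 1) k); subst; try lia; ring.
Qed.

Lemma coneA_dec D w k : D (k + 1) -> coneA D w -> 1 <= diff2 w k -> coneA D (update w k (-1)).
Proof.
  intros Hk Hw Hd. apply IZR_le in Hd. pose proof (diff2_slopeA w k) as E.
  destruct (Hw (k + 1)) as [Hw1 HA1]. specialize (HA1 Hk). apply IZR_le in Hw1.
  pose proof (g_pos k) as Hg.
  assert (HAk : (g k <= slopeA w k)%R) by nra.
  assert (Hwk : 1 <= w k) by (apply le_IZR; unfold slopeA in HAk; nra).
  intros j. destruct (Hw j) as [Hwj HAj]. split.
  - unfold update. destruct (Z.eqb_spec j k); subst; lia.
  - intros Hj. rewrite slopeA_update.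
    destruct (Z.eqb_spec j k); destruct (Z.eqb_spec (j + 1) k); subst; try lia;
      specialize (HAj Hj); lra.
Qed.

Lemma coneA_inc D w k : D (k - 2) -> coneA D w -> diff2 w (k - 2) <= -1 -> coneA D (update w k 1).
Proof.
  intros Hk Hw Hd. apply IZR_le in Hd. pose proof (diff2_slopeA w (k - 2)) as E.
  replace (k - 2 + 1) with (k - 1) in E by ring.
  destruct (Hw (k - 2)) as [_ HA2]. specialize (HA2 Hk).
  pose proof (g_pos (k - 2)) as Hg2.
  assert (HA1 : (1 <= slopeA w (k - 1))%R) by nra.
  intros j. destruct (Hw j) as [Hwj HAj]. split.
  - unfold update. destruct (Z.eqb_spec j k); lia.
  - intros Hj. rewrite slopeA_update. specialize (HAj Hj). pose proof (g_pos k).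
    destruct (Z.eqb_spec j k); destruct (Z.eqb_spec (j + 1) k) as [<-|]; try lia; try lra.
    replace (j + 1 - 1) with j in HA1 by ring. lra.
Qed.

Lemma coneB_dec D w k : D (k + 1) -> coneB D w -> 1 <= diff2 w k -> coneB D (update w k (-1)).
Proof.
  intros Hk Hw Hd. apply IZR_le in Hd. pose proof (diff2_slopeB w k) as E.
  destruct (Hw (k + 1)) as [_ HB1]. specialize (HB1 Hk).
  pose proof (g_pos k) as Hg.
  assert (HBk : (1 <= slopeB w k)%R) by nra.
  intros j. destruct (Hw j) as [Hwj HBj]. split.
  - unfold update. destruct (Z.eqb_spec j k); lia.
  - intros Hj. rewrite slopeB_update.
    destruct (Z.eqb_spec j k); destruct (Z.eqb_spec (j + 1) k); subst; try lia;
      specialize (HBj Hj); nra.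
Qed.

Lemma coneB_inc D w k : D (k - 2) -> coneB D w -> diff2 w (k - 2) <= -1 -> coneB D (update w k 1).
Proof.
  intros Hk Hw Hd. apply IZR_le in Hd. pose proof (diff2_slopeB w (k - 2)) as E.
  replace (k - 2 + 1) with (k - 1) in E by ring.
  replace (g (k - 2)) with (g k) in E by (rewrite <- (g_period (k - 2)); f_equal; ring).
  destruct (Hw (k - 2)) as [_ HB2]. specialize (HB2 Hk).
  pose proof (g_pos k) as Hg.
  assert (HBk : (g k <= slopeB w (k - 1))%R) by nra.
  destruct (Hw (k - 1)) as [Hw1 _]. apply IZR_le in Hw1.
  unfold slopeB in HBk. replace (k - 1 + 1) with k in HBk by ring.
  assert (Hwk : w k <= -1) by (apply le_IZR; nra).
  intros j. destruct (Hw j) as [Hwj HBj]. split.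
  - unfold update. destruct (Z.eqb_spec j k); subst; lia.
  - intros Hj. rewrite slopeB_update. specialize (HBj Hj).
    destruct (Z.eqb_spec j k); destruct (Z.eqb_spec (j + 1) k) as [<-|]; try lia; try lra.
    unfold slopeB in *. replace (j + 1 - 1) with j in * by ring. lra.
Qed.

End Cones.

Lemma ik_add2 k : ik (k + 2) = ik k.
Proof. unfold ik. rewrite Z.odd_add. simpl. destruct (Z.odd k); reflexivity. Qed.

Lemma cartan_diag a1 a2 i : cartan a1 a2 i i = 2.
Proof. destruct i; reflexivity. Qed.

Lemma cartan_succ a1 a2 k : cartan a1 a2 (ik (k + 1)) (ik k) = - cpar a1 a2 k.
Proof.
  unfold ik, cpar. rewrite Z.odd_add, <- Z.negb_odd. simpl. destruct (Z.odd k); reflexivity.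
Qed.

Lemma pseq_diff2 a1 a2 k1 k2 k : diff2 (cpar a1 a2) (pseq a1 a2 k1 k2) k = 0.
Proof.
  unfold diff2, pseq.
  destruct (Z_le_gt_dec 0 k).
  - rewrite !(proj2 (Z.leb_le _ _)) by lia.
    replace (Z.to_nat (k + 1)) with (S (Z.to_nat k)) by lia.
    replace (Z.to_nat (k + 2)) with (S (S (Z.to_nat k))) by lia.
    cbn [pp]. rewrite Z2Nat.id by lia. destruct (pp a1 a2 k1 k2 (Z.to_nat k)). simpl. ring.
  - rewrite (proj2 (Z.leb_gt 0 k)) by lia.
    replace (Z.to_nat (- k)) with (S (Z.to_nat (- k - 1))) by lia.
    cbn [pn]. replace (- Z.of_nat (S (Z.to_nat (- k - 1)))) with k by lia.
    destruct (Z.eq_dec k (-1)) as [->|]; [simpl; ring|].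
    destruct (Z.eq_dec k (-2)) as [->|]; [simpl; ring|].
    rewrite !(proj2 (Z.leb_gt 0 _)) by lia.
    replace (Z.to_nat (- (k + 1))) with (S (Z.to_nat (- k - 2))) by lia.
    replace (Z.to_nat (- k - 1)) with (S (Z.to_nat (- k - 2))) by lia.
    replace (Z.to_nat (- (k + 2))) with (Z.to_nat (- k - 2)) by lia.
    cbn [pn]. destruct (pn a1 a2 k1 k2 (Z.to_nat (- k - 2))). simpl. ring.
Qed.

Lemma gammaR_add2 a1 a2 k : gammaR a1 a2 (k + 2) = gammaR a1 a2 k.
Proof. unfold gammaR. rewrite Z.even_add. simpl. destruct (Z.even k); reflexivity. Qed.

Section Gamma.

Variables a1 a2 : Z.
Hypothesis a1_ge1 : 1 <= a1.
Hypothesis a2_ge1 : 1 <= a2.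
Hypothesis a1a2_gt4 : 4 < a1 * a2.

Lemma alphaR_betaR :
  (0 < alphaR a1 a2 /\ 0 < betaR a1 a2 /\
   betaR a1 a2 + / alphaR a1 a2 = IZR a2 /\ alphaR a1 a2 + / betaR a1 a2 = IZR a1)%R.
Proof.
  unfold alphaR, betaR.
  assert (Hdisc : 0 <= a1 * a1 * a2 * a2 - 4 * a1 * a2) by nia.
  set (s := sqrt _). assert (Hs0 : (0 <= s)%R) by apply sqrt_pos.
  assert (Hs2 : (s * s = IZR (a1 * a1 * a2 * a2 - 4 * a1 * a2))%R)
    by (apply sqrt_sqrt, IZR_le; lia).
  rewrite minus_IZR, !mult_IZR in Hs2. rewrite mult_IZR.
  assert (A1 : (1 <= IZR a1)%R) by (apply IZR_le; lia).
  assert (A2 : (1 <= IZR a2)%R) by (apply IZR_le; lia).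
  repeat split; try (apply Rdiv_lt_0_compat; nra); field_simplify_eq; nra.
Qed.

Lemma gammaR_pos k : (0 < gammaR a1 a2 k)%R.
Proof. destruct alphaR_betaR as (? & ? & _). unfold gammaR. destruct (Z.even k); auto. Qed.

Lemma cpar_gammaR k : IZR (cpar a1 a2 k) = (gammaR a1 a2 (k + 1) + / gammaR a1 a2 k)%R.
Proof.
  destruct alphaR_betaR as (_ & _ & ? & ?). unfold gammaR, cpar.
  rewrite Z.even_add. simpl. destruct (Z.even k); simpl; auto.
Qed.

End Gamma.

(** * The functions sigma *)

Section Sigma.

Variables a1 a2 : Z.

Definition sum_above (N : Z) (x : Z -> Z) (k : Z) : Z :=
  zsum (k + 1) N (fun j => cartan a1 a2 (ik j) (ik k) * x j).

Definition sum_below (N : Z) (x : Z -> Z) (k : Z) : Z :=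
  zsum (- N) (k - 1) (fun j => cartan a1 a2 (ik j) (ik k) * x j).

Lemma sum_above_add2 N x k : (forall j, N < j -> x j = 0) ->
  sum_above N x k = - cpar a1 a2 k * x (k + 1) + 2 * x (k + 2) + sum_above N x (k + 2).
Proof.
  intros Hx. unfold sum_above.
  rewrite (zsum_ext (k + 2 + 1) N _ (fun j => cartan a1 a2 (ik j) (ik k) * x j))
    by (intros; rewrite ik_add2; reflexivity).
  destruct (Z_le_gt_dec (k + 2) N).
  - rewrite (zsum_cons (k + 1)), (zsum_cons (k + 1 + 1)) by lia.
    replace (k + 1 + 1) with (k + 2) by ring.
    rewrite cartan_succ, ik_add2, cartan_diag. ring.
  - rewrite (zsum_nil (k + 2 + 1)), (Hx (k + 2)) by lia.
    destruct (Z.eq_dec (k + 1) N) as [<-|].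
    + rewrite zsum_cons, zsum_nil, cartan_succ by lia. ring.
    + rewrite zsum_nil, (Hx (k + 1)) by lia. ring.
Qed.

Lemma sum_below_add2 N x k : 0 <= N -> (forall j, j < - N -> x j = 0) ->
  sum_below N x (k + 2) = sum_below N x k + 2 * x k - cpar a1 a2 k * x (k + 1).
Proof.
  intros HN Hx. unfold sum_below. replace (k + 2 - 1) with (k + 1) by ring.
  rewrite (zsum_ext (- N) (k + 1) _ (fun j => cartan a1 a2 (ik j) (ik k) * x j))
    by (intros; rewrite ik_add2; reflexivity).
  destruct (Z_le_gt_dec (- N) k).
  - rewrite (zsum_split (- N) (k - 1) (k + 1)), (zsum_cons (k - 1 + 1)),
      (zsum_cons (k - 1 + 1 + 1)), (zsum_nil (k - 1 + 1 + 1 + 1)) by lia.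
    replace (k - 1 + 1 + 1) with (k + 1) by ring. replace (k - 1 + 1) with k by ring.
    rewrite cartan_diag, cartan_succ. ring.
  - rewrite (zsum_nil (- N) (k - 1)), (Hx k) by lia.
    destruct (Z.eq_dec (k + 1) (- N)) as [E|].
    + rewrite E, zsum_cons, zsum_nil by lia. rewrite <- E, cartan_succ. ring.
    + rewrite zsum_nil, (Hx (k + 1)) by lia. ring.
Qed.

Lemma sigma_plus_diff N y k : (forall j, N < j -> y j = 0) ->
  sigma_plus a1 a2 N y k - sigma_plus a1 a2 N y (k + 2) = diff2 (cpar a1 a2) y k.
Proof.
  intros Hy. unfold sigma_plus, diff2. fold (sum_above N y k) (sum_above N y (k + 2)).
  rewrite sum_above_add2 by auto. ring.
Qed.

Lemma sigma_minus_diff N z k : 0 <= N -> (forall j, j < - N -> z j = 0) ->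
  sigma_minus a1 a2 N z (k + 2) - sigma_minus a1 a2 N z k = - diff2 (cpar a1 a2) z k.
Proof.
  intros HN Hz. unfold sigma_minus, diff2. fold (sum_below N z k) (sum_below N z (k + 2)).
  rewrite sum_below_add2 by auto. ring.
Qed.

Lemma sigmaZ_eq mu N x k : 0 <= N -> supported N x ->
  sigmaZ a1 a2 mu N x k = x k + sum_above N x k - (if k <=? 0 then mu (ik k) else 0).
Proof.
  intros HN Hx. unfold sigmaZ.
  destruct (Z.leb_spec 1 k).
  { rewrite (proj2 (Z.leb_gt k 0)) by lia. unfold sigma_plus, sum_above. ring. }
  rewrite (proj2 (Z.leb_le k 0)) by lia.
  assert (Hall : zsum (- N) N (fun j => x j * cartan a1 a2 (ik j) (ik k))
                 = sum_below N x k + 2 * x k + sum_above N x k).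
  { unfold sum_below, sum_above.
    rewrite (zsum_ext (- N) N _ (fun j => cartan a1 a2 (ik j) (ik k) * x j)) by (intros; ring).
    destruct (Z_le_gt_dec (- N) k).
    - rewrite (zsum_split (- N) (k - 1) N), (zsum_cons (k - 1 + 1)) by lia.
      replace (k - 1 + 1) with k by ring. rewrite cartan_diag. ring.
    - rewrite (zsum_nil (- N) (k - 1)), (Hx k), (zsum_split (k + 1) (- N - 1) N) by lia.
      rewrite (zsum_eq0 (k + 1) (- N - 1)) by (intros j Hj; rewrite Hx by lia; ring).
      replace (- N - 1 + 1) with (- N) by ring. ring. }
  unfold sigma_minus, wt_pair. fold (sum_below N x k). rewrite Hall. ring.
Qed.

Lemma sigmaZ_above mu N x j : 0 <= N -> supported N x -> N < j -> sigmaZ a1 a2 mu N x j = 0.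
Proof.
  intros HN Hx Hj. rewrite sigmaZ_eq, (Hx j) by (auto; lia). unfold sum_above.
  rewrite zsum_nil by lia. destruct (Z.leb_spec j 0); lia.
Qed.

Lemma sigmaZ_below mu N x j : 0 <= N -> supported N x -> j < - N ->
  sigmaZ a1 a2 mu N x j = - wt_pair a1 a2 mu N x (ik j).
Proof.
  intros HN Hx Hj. unfold sigmaZ, sigma_minus.
  rewrite (proj2 (Z.leb_gt 1 j)), zsum_nil, (Hx j) by lia. ring.
Qed.

Variables k1 k2 : Z.

Definition plus_p_nonpos (x : Z -> Z) (j : Z) : Z :=
  x j + (if j <=? 0 then pseq a1 a2 k1 k2 j else 0).

Definition minus_p_pos (x : Z -> Z) (j : Z) : Z :=
  x j - (if 1 <=? j then pseq a1 a2 k1 k2 j else 0).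

Lemma sigmaZ_diff N x k : 0 <= N -> supported N x ->
  sigmaZ a1 a2 (lam k1 k2) N x k - sigmaZ a1 a2 (lam k1 k2) N x (k + 2)
  = diff2 (cpar a1 a2) (plus_p_nonpos x) k.
Proof.
  intros HN Hx. rewrite !sigmaZ_eq, sum_above_add2, ik_add2 by (auto; intros; apply Hx; lia).
  pose proof (pseq_diff2 a1 a2 k1 k2 k) as Hp.
  unfold diff2, plus_p_nonpos in *. replace (k + 1 + 1) with (k + 2) in * by ring.
  destruct (Z.leb_spec k 0); destruct (Z.leb_spec (k + 1) 0); destruct (Z.leb_spec (k + 2) 0);
    try lia; try (rewrite <- Hp; ring).
  (* at k = -1 and k = 0 the jump of the weight term is the second difference of p there *)
  - replace k with (-1) in * by lia.
    replace (-1 + 1) with 0 in * by ring. replace (-1 + 2) with 1 in * by ring.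
    change (pseq a1 a2 k1 k2 1) with k1 in Hp. change (lam k1 k2 (ik (-1))) with k1.
    replace (pseq a1 a2 k1 k2 (-1)) with (cpar a1 a2 (-1) * pseq a1 a2 k1 k2 0 - k1) by lia.
    ring.
  - replace k with 0 by lia.
    change (pseq a1 a2 k1 k2 0) with k2. change (lam k1 k2 (ik 0)) with (- k2).
    ring.
Qed.

Lemma plus_p_nonpos_pos x j : 1 <= j -> plus_p_nonpos x j = x j.
Proof. intros Hj. unfold plus_p_nonpos. rewrite (proj2 (Z.leb_gt j 0)) by lia. ring. Qed.

Lemma minus_p_pos_nonpos x j : j <= 0 -> minus_p_pos x j = x j.
Proof. intros Hj. unfold minus_p_pos. rewrite (proj2 (Z.leb_gt 1 j)) by lia. ring. Qed.

Lemma plus_p_nonpos_update x k d : plus_p_nonpos (update x k d) = update (plus_p_nonpos x) k d.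
Proof.
  apply functional_extensionality. intros j. unfold plus_p_nonpos, update.
  destruct (j =? k); ring.
Qed.

Lemma minus_p_pos_update x k d : minus_p_pos (update x k d) = update (minus_p_pos x) k d.
Proof.
  apply functional_extensionality. intros j. unfold minus_p_pos, update.
  destruct (j =? k); ring.
Qed.

Lemma diff2_minus_p_pos x k :
  diff2 (cpar a1 a2) (minus_p_pos x) k = diff2 (cpar a1 a2) (plus_p_nonpos x) k.
Proof.
  pose proof (pseq_diff2 a1 a2 k1 k2 k) as Hp. unfold diff2, minus_p_pos, plus_p_nonpos in *.
  repeat match goal with |- context [?a <=? ?b] => destruct (Z.leb_spec a b) end; lia.
Qed.

End Sigma.

(** * Xi_iota[lambda] as a pair of cone conditions *)

Section Characterization.

Variables a1 a2 k1 k2 : Z.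

Local Notation U := (plus_p_nonpos a1 a2 k1 k2).
Local Notation V := (minus_p_pos a1 a2 k1 k2).
Local Notation g := (gammaR a1 a2).

Lemma plus_p_nonpos_IZR x j :
  IZR (U x j) = (IZR (x j) + if j <=? 0 then IZR (pseq a1 a2 k1 k2 j) else 0)%R.
Proof. unfold plus_p_nonpos. destruct (j <=? 0); rewrite ?plus_IZR; lra. Qed.

Lemma minus_p_pos_IZR x j :
  IZR (V x j) = (IZR (x j) - if 1 <=? j then IZR (pseq a1 a2 k1 k2 j) else 0)%R.
Proof. unfold minus_p_pos. destruct (1 <=? j); rewrite ?minus_IZR; lra. Qed.

Lemma SigmaSet_cones x : SigmaSet a1 a2 k1 k2 x <->
  (exists N, supported N x) /\
  coneA g (fun _ => True) (U x) /\ coneB g (fun _ => True) (V x).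
Proof.
  unfold SigmaSet, in_Ziota, Xi_nonneg, coneA, coneB, slopeA, slopeB. cbv zeta.
  split.
  (* each inequality of Xi is a cone inequality for u or v at the index j, j - 1 or 0 *)
  - intros [(Hpos & Hneg & HN) (H0 & H1 & Hp & Hm)].
    split; [auto|split]; intros j; (split; [apply le_IZR|intros _]);
      rewrite ?plus_p_nonpos_IZR, ?minus_p_pos_IZR;
      repeat match goal with |- context [?a <=? ?b] => destruct (Z.leb_spec a b); try lia end;
      try pose proof (IZR_le _ _ (Hpos j ltac:(lia)));
      try pose proof (IZR_le _ _ (Hneg j ltac:(lia)));
      try pose proof (Hp j ltac:(lia)); try pose proof (Hm j ltac:(lia));
      try (pose proof (Hm (j + 1) ltac:(lia)); rewrite Z.add_simpl_r in * );
      try (assert (j = 0) as -> by lia; simpl (0 + 1));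
      try lra.
  - intros [HN [HA HB]].
    assert (HU : forall j, (0 <= IZR (U x j))%R /\ (0 <= g j * IZR (U x j) - IZR (U x (j + 1)))%R)
      by (intros j; destruct (HA j) as [? ?]; split; [apply IZR_le|]; auto).
    assert (HV : forall j,
      (IZR (V x j) <= 0)%R /\ (0 <= IZR (V x j) - g (j + 1) * IZR (V x (j + 1)))%R)
      by (intros j; destruct (HB j) as [? ?]; split; [apply IZR_le|]; auto).
    setoid_rewrite plus_p_nonpos_IZR in HU. setoid_rewrite minus_p_pos_IZR in HV.
    split; [split; [|split]; [..|auto]|split; [|split; [|split]]];
      try intros k Hk; try apply le_IZR;
      try pose proof (HU k); try pose proof (HV k); try pose proof (HU (k - 1));
      try pose proof (HV (k - 1)); pose proof (HU 0); pose proof (HV 0);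
      repeat match goal with H : context [?a <=? ?b] |- _ => destruct (Z.leb_spec a b); try lia end;
      rewrite ?Z.sub_add in *; simpl (0 + 1) in *; lra.
Qed.

End Characterization.

Lemma in_windowZ i N j : In j (windowZ i N) <-> - (N + 2) <= j <= N + 2 /\ ik j = i.
Proof. apply in_par_filter_zrange. Qed.

Lemma windowZ_nonempty i N : 0 <= N -> windowZ i N <> [].
Proof.
  intros HN E. destruct i;
    [ assert (H : In 1 (windowZ I1 N)) | assert (H : In 0 (windowZ I2 N)) ];
    try (apply in_windowZ; split; [lia | reflexivity]); rewrite E in H; contradiction.
Qed.

Lemma supported_update N x k d :
  supported N x -> - (N + 2) <= k <= N + 2 -> supported (N + 2) (update x k d).
Proof. intros Hx Hk j Hj. unfold update. destruct (Z.eqb_spec j k); [lia|]. apply Hx. lia. Qed.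

Lemma update_update x k d : update (update x k d) k (- d) = x.
Proof.
  apply functional_extensionality. intros j. unfold update. destruct (j =? k); ring.
Qed.

Lemma exists_last_nonzero (y : Z -> Z) N k0 : (forall k, N < k -> y k = 0) -> y k0 <> 0 ->
  exists n, y n <> 0 /\ forall j, n < j -> y j = 0.
Proof.
  intros Hy. remember (Z.to_nat (N - k0)) as m eqn:Hm. revert k0 Hm.
  induction m as [m IH] using (well_founded_induction lt_wf). intros k0 Hm Hk0.
  destruct (classic (exists j, k0 < j /\ y j <> 0)) as [[j [Hj Hyj]]|Hnone].
  - assert (j <= N) by (apply Z.nlt_ge; intros ?; apply Hyj, Hy; lia).
    apply (IH (Z.to_nat (N - j))) with j; auto; lia.
  - exists k0. split; [auto|]. intros j Hj. apply NNPP. intros Hyj. apply Hnone. eauto.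
Qed.

Lemma exists_first_nonzero (y : Z -> Z) N k0 : (forall k, k < - N -> y k = 0) -> y k0 <> 0 ->
  exists n, y n <> 0 /\ forall j, j < n -> y j = 0.
Proof.
  intros Hy Hk0.
  destruct (exists_last_nonzero (fun k => y (- k)) N (- k0)) as [n [Hn Hj]].
  - intros k Hk. apply Hy. lia.
  - rewrite Z.opp_involutive. auto.
  - exists (- n). split; [auto|]. intros j Hjn. rewrite <- (Z.opp_involutive j). apply Hj. lia.
Qed.

Section Crystal.

Variables a1 a2 k1 k2 : Z.
Hypothesis a1_ge1 : 1 <= a1.
Hypothesis a2_ge1 : 1 <= a2.
Hypothesis a1a2_gt4 : 4 < a1 * a2.

Let g_pos := gammaR_pos a1 a2 a1_ge1 a2_ge1 a1a2_gt4.
Let c_g := cpar_gammaR a1 a2 a1_ge1 a2_ge1 a1a2_gt4.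
Let g_period := gammaR_add2 a1 a2.

Local Notation U := (plus_p_nonpos a1 a2 k1 k2).
Local Notation V := (minus_p_pos a1 a2 k1 k2).

Lemma SigmaSet_dec x N k : SigmaSet a1 a2 k1 k2 x -> supported N x -> - (N + 2) <= k <= N + 2 ->
  1 <= diff2 (cpar a1 a2) (U x) k -> SigmaSet a1 a2 k1 k2 (update x k (-1)).
Proof.
  intros (_ & HA & HB)%SigmaSet_cones Hx Hk Hgap. apply SigmaSet_cones.
  rewrite plus_p_nonpos_update, minus_p_pos_update.
  split; [exists (N + 2); apply supported_update; auto | split].
  - apply coneA_dec with (c := cpar a1 a2); auto.
  - apply coneB_dec with (c := cpar a1 a2); auto. rewrite diff2_minus_p_pos. auto.
Qed.

Lemma SigmaSet_inc x N k : SigmaSet a1 a2 k1 k2 x -> supported N x -> - (N + 2) <= k <= N + 2 ->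
  diff2 (cpar a1 a2) (U x) (k - 2) <= -1 -> SigmaSet a1 a2 k1 k2 (update x k 1).
Proof.
  intros (_ & HA & HB)%SigmaSet_cones Hx Hk Hgap. apply SigmaSet_cones.
  rewrite plus_p_nonpos_update, minus_p_pos_update.
  split; [exists (N + 2); apply supported_update; auto | split].
  - apply coneA_inc with (c := cpar a1 a2); auto.
  - apply coneB_inc with (c := cpar a1 a2); auto. rewrite diff2_minus_p_pos. auto.
Qed.

Lemma etildeZ_closed x N i : SigmaSet a1 a2 k1 k2 x -> 0 <= N -> supported N x ->
  etildeZ a1 a2 (lam k1 k2) i N x = None \/
  exists y, etildeZ a1 a2 (lam k1 k2) i N x = Some y /\ SigmaSet a1 a2 k1 k2 y.
Proof.
  intros Hx HN Hsupp. unfold etildeZ, epsZ.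
  set (W := windowZ i N). set (s := sigmaZ a1 a2 (lam k1 k2) N x).
  destruct (Z.ltb_spec 0 (lmax W s)) as [Hpos|]; [right|left; reflexivity].
  assert (HW : forall j, In j W -> - (N + 3) < j) by (intros j Hj; apply in_windowZ in Hj; lia).
  assert (Hne : W <> []) by (intros E; rewrite E in Hpos; simpl in Hpos; lia).
  pose proof (argmax_of_last_max W s _ Hne HW) as Hk.
  set (k := argmax_of W s (lmax W s) (- (N + 3))) in *.
  eexists; split; [reflexivity|].
  rewrite (last_max_lmax _ _ _ Hk) in Hpos. destruct Hk as (HkW & _ & Hlt).
  pose proof HkW as [Hkr Hik]%in_windowZ.
  assert (HkN : k <= N).
  { apply Z.nlt_ge. intros ?. unfold s in Hpos. rewrite sigmaZ_above in Hpos by (auto; lia). lia. }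
  apply (SigmaSet_dec x N); auto.
  rewrite <- (sigmaZ_diff a1 a2 k1 k2 N) by auto. fold s.
  assert (Hk2 : In (k + 2) W) by (apply in_windowZ; rewrite ik_add2; split; [lia | auto]).
  specialize (Hlt _ Hk2 ltac:(lia)). lia.
Qed.

Lemma ftildeZ_closed x N i : SigmaSet a1 a2 k1 k2 x -> 0 <= N -> supported N x ->
  ftildeZ a1 a2 (lam k1 k2) i N x = None \/
  exists y, ftildeZ a1 a2 (lam k1 k2) i N x = Some y /\ SigmaSet a1 a2 k1 k2 y.
Proof.
  intros Hx HN Hsupp. unfold ftildeZ, phiZ, epsZ.
  set (W := windowZ i N). set (s := sigmaZ a1 a2 (lam k1 k2) N x).
  destruct (Z.ltb_spec 0 (lmax W s + wt_pair a1 a2 (lam k1 k2) N x i)) as [Hpos|];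
    [right|left; reflexivity].
  assert (HW : forall j, In j W -> j < N + 3) by (intros j Hj; apply in_windowZ in Hj; lia).
  pose proof (argmin_of_first_max W s _ (windowZ_nonempty i N HN) HW) as Hk.
  set (k := argmin_of W s (lmax W s) (N + 3)) in *.
  eexists; split; [reflexivity|].
  rewrite (first_max_lmax _ _ _ Hk) in Hpos. destruct Hk as (HkW & _ & Hlt).
  pose proof HkW as [Hkr Hik]%in_windowZ.
  assert (HkN : - N <= k).
  { apply Z.nlt_ge. intros ?. unfold s in Hpos.
    rewrite sigmaZ_below, Hik in Hpos by (auto; lia). lia. }
  apply (SigmaSet_inc x N); auto.
  rewrite <- (sigmaZ_diff a1 a2 k1 k2 N) by auto. rewrite Z.sub_add. fold s.
  assert (Hk2 : In (k - 2) W).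
  { apply in_windowZ. rewrite <- (ik_add2 (k - 2)), Z.sub_add. split; [lia | auto]. }
  specialize (Hlt _ Hk2 ltac:(lia)). lia.
Qed.

Definition cone_plus (N : Z) (y : Z -> Z) : Prop :=
  supp_plus N y /\ coneA (gammaR a1 a2) (fun j => 1 <= j) y.

Definition cone_minus (N : Z) (z : Z -> Z) : Prop :=
  supp_minus N z /\ coneB (gammaR a1 a2) (fun j => j <= -1) z.

Lemma sigma_plus_update N y k d j : ik j = ik k -> k <= N ->
  sigma_plus a1 a2 N (update y k d) j
  = sigma_plus a1 a2 N y j + (if j =? k then d else 0) + (if j <? k then 2 * d else 0).
Proof.
  intros Hik Hk. unfold sigma_plus.
  rewrite (zsum_ext (j + 1) N _ (fun l => cartan a1 a2 (ik l) (ik j) * y l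
                                         + (if l =? k then 2 * d else 0))).
  - rewrite zsum_add. unfold update at 1. destruct (Z.ltb_spec j k).
    + rewrite zsum_delta by lia. destruct (Z.eqb_spec j k); lia.
    + rewrite (zsum_eq0 _ _ (fun l => if l =? k then 2 * d else 0))
        by (intros l Hl; destruct (Z.eqb_spec l k); lia).
      destruct (j =? k); lia.
  - intros l Hl. unfold update. destruct (Z.eqb_spec l k) as [->|]; [|ring].
    rewrite <- Hik, cartan_diag. ring.
Qed.

Lemma sigma_minus_update N z k d j : ik j = ik k -> - N <= k ->
  sigma_minus a1 a2 N (update z k d) j
  = sigma_minus a1 a2 N z j - (if j =? k then d else 0) - (if k <? j then 2 * d else 0).
Proof.
  intros Hik Hk. unfold sigma_minus.
  rewrite (zsum_ext (- N) (j - 1) _ (fun l => cartan a1 a2 (ik l) (ik j) * z l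
                                            + (if l =? k then 2 * d else 0))).
  - rewrite zsum_add. unfold update at 1. destruct (Z.ltb_spec k j).
    + rewrite zsum_delta by lia. destruct (Z.eqb_spec j k); lia.
    + rewrite (zsum_eq0 _ _ (fun l => if l =? k then 2 * d else 0))
        by (intros l Hl; destruct (Z.eqb_spec l k); lia).
      destruct (j =? k); lia.
  - intros l Hl. unfold update. destruct (Z.eqb_spec l k) as [->|]; [|ring].
    rewrite <- Hik, cartan_diag. ring.
Qed.

Lemma fplus_update_last_max N y k : k <= N ->
  is_last_max (par_filter (ik k) (zrange 1 (N + 2))) (sigma_plus a1 a2 N y) k ->
  fplus a1 a2 (ik k) N (update y k (-1)) = y.
Proof.
  intros HkN Hk. unfold fplus.
  set (l := par_filter (ik k) (zrange 1 (N + 2))) in *.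
  set (s' := sigma_plus a1 a2 N (update y k (-1))).
  assert (Hk' : is_first_max l s' k).
  { apply (first_max_of_lower_left l (sigma_plus a1 a2 N y)); auto.
    intros j [_ Hj]%in_par_filter_zrange. unfold s'. rewrite sigma_plus_update by auto.
    destruct (j =? k), (j <? k); lia. }
  rewrite (first_max_lmax _ _ _ Hk'), (first_max_argmin_of l s' (N + 3) k); auto.
  - apply update_update.
  - intros j Hj. apply in_par_filter_zrange in Hj. lia.
Qed.

Lemma eminus_update_first_max N z k : - N <= k ->
  is_first_max (par_filter (ik k) (zrange (- (N + 2)) 0)) (sigma_minus a1 a2 N z) k ->
  eminus a1 a2 (ik k) N (update z k 1) = z.
Proof.
  intros HkN Hk. unfold eminus.
  set (l := par_filter (ik k) (zrange (- (N + 2)) 0)) in *.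
  set (s' := sigma_minus a1 a2 N (update z k 1)).
  assert (Hk' : is_last_max l s' k).
  { apply (last_max_of_lower_right l (sigma_minus a1 a2 N z)); auto.
    intros j [_ Hj]%in_par_filter_zrange. unfold s'. rewrite sigma_minus_update by auto.
    destruct (j =? k), (k <? j); lia. }
  rewrite (last_max_lmax _ _ _ Hk'), (last_max_argmax_of l s' (- (N + 3)) k); auto.
  - apply update_update.
  - intros j Hj. apply in_par_filter_zrange in Hj. lia.
Qed.

Lemma cone_plus_step N y : cone_plus N y -> (exists k0, y k0 <> 0) ->
  exists i k, 1 <= k <= N /\ cone_plus N (update y k (-1)) /\
              fplus a1 a2 i N (update y k (-1)) = y.
Proof.
  intros [Hsupp HA] [k0 Hk0].
  destruct (exists_last_nonzero y N k0) as [n [Hn Hlast]]; [intros; apply Hsupp; lia | auto |].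
  assert (Hn1 : 1 <= n <= N) by (split; apply Z.nlt_ge; intros ?; apply Hn, Hsupp; lia).
  set (l := par_filter (ik n) (zrange 1 (N + 2))). set (s := sigma_plus a1 a2 N y).
  assert (Hl : forall j, In j l <-> 1 <= j <= N + 2 /\ ik j = ik n) by apply in_par_filter_zrange.
  assert (Hnl : In n l) by (apply Hl; split; [lia | auto]).
  pose proof (argmax_of_last_max l s 0 ltac:(intros E; rewrite E in Hnl; contradiction)
    ltac:(intros j Hj; apply Hl in Hj; lia)) as Hk.
  set (k := argmax_of l s (lmax l s) 0) in *.
  pose proof Hk as (HkW & Hle & Hlt). pose proof HkW as [Hkr Hik]%Hl.
  assert (Hsn : s n = y n).
  { unfold s, sigma_plus. rewrite zsum_eq0 by (intros j Hj; rewrite Hlast by lia; ring). ring. }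
  assert (Hsk : 0 < s k) by (specialize (Hle n Hnl); destruct (HA n); lia).
  assert (HkN : k <= N).
  { apply Z.nlt_ge. intros ?. unfold s, sigma_plus in Hsk.
    rewrite zsum_nil, (Hsupp k) in Hsk by lia. lia. }
  assert (Hgap : 1 <= diff2 (cpar a1 a2) y k).
  { rewrite <- (sigma_plus_diff a1 a2 N) by (intros; apply Hsupp; lia). fold s.
    assert (Hk2 : In (k + 2) l) by (apply Hl; rewrite ik_add2; split; [lia | auto]).
    specialize (Hlt _ Hk2 ltac:(lia)). lia. }
  exists (ik k), k. split; [lia | split; [split|]].
  - intros j Hj. unfold update. destruct (Z.eqb_spec j k); [lia|]. apply Hsupp. auto.
  - apply coneA_dec with (c := cpar a1 a2); auto. lia.
  - apply fplus_update_last_max; auto. rewrite Hik. auto.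
Qed.

Lemma cone_minus_step N z : 0 <= N -> cone_minus N z -> (exists k0, z k0 <> 0) ->
  exists i k, - N <= k <= 0 /\ cone_minus N (update z k 1) /\
              eminus a1 a2 i N (update z k 1) = z.
Proof.
  intros HN [Hsupp HB] [k0 Hk0].
  destruct (exists_first_nonzero z N k0) as [n [Hn Hfirst]]; [intros; apply Hsupp; lia | auto |].
  assert (Hn1 : - N <= n <= 0) by (split; apply Z.nlt_ge; intros ?; apply Hn, Hsupp; lia).
  set (l := par_filter (ik n) (zrange (- (N + 2)) 0)). set (s := sigma_minus a1 a2 N z).
  assert (Hl : forall j, In j l <-> - (N + 2) <= j <= 0 /\ ik j = ik n)
    by apply in_par_filter_zrange.
  assert (Hnl : In n l) by (apply Hl; split; [lia | auto]).
  pose proof (argmin_of_first_max l s 1 ltac:(intros E; rewrite E in Hnl; contradiction)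
    ltac:(intros j Hj; apply Hl in Hj; lia)) as Hk.
  set (k := argmin_of l s (lmax l s) 1) in *.
  pose proof Hk as (HkW & Hle & Hlt). pose proof HkW as [Hkr Hik]%Hl.
  assert (Hsn : s n = - z n).
  { unfold s, sigma_minus. rewrite zsum_eq0 by (intros j Hj; rewrite Hfirst by lia; ring). ring. }
  assert (Hsk : 0 < s k) by (specialize (Hle n Hnl); destruct (HB n); lia).
  assert (HkN : - N <= k).
  { apply Z.nlt_ge. intros ?. unfold s, sigma_minus in Hsk.
    rewrite zsum_nil, (Hsupp k) in Hsk by lia. lia. }
  assert (Hgap : diff2 (cpar a1 a2) z (k - 2) <= -1).
  { pose proof (sigma_minus_diff a1 a2 N z (k - 2) HN ltac:(intros; apply Hsupp; lia)) as E.
    rewrite Z.sub_add in E. fold s in E.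
    assert (Hk2 : In (k - 2) l).
    { apply Hl. rewrite <- (ik_add2 (k - 2)), Z.sub_add. split; [lia | auto]. }
    specialize (Hlt _ Hk2 ltac:(lia)). lia. }
  exists (ik k), k. split; [lia | split; [split|]].
  - intros j Hj. unfold update. destruct (Z.eqb_spec j k); [lia|]. apply Hsupp. auto.
  - apply coneB_inc with (c := cpar a1 a2); auto. lia.
  - apply eminus_update_first_max; auto. rewrite Hik. auto.
Qed.

Lemma cone_plus_ImPlus N y : cone_plus N y -> ImPlus a1 a2 y.
Proof.
  remember (Z.to_nat (zsum 1 N y)) as m eqn:Hm. revert y Hm.
  induction m as [m IH] using (well_founded_induction lt_wf). intros y Hm Hy.
  destruct (classic (exists k0, y k0 <> 0)) as [Hnz|Hz].
  - destruct (cone_plus_step N y Hy Hnz) as (i & k & Hk & Hy' & <-).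
    apply ImPlusF; [|lia|intros j Hj; apply (proj1 Hy'); lia].
    apply (IH (Z.to_nat (zsum 1 N (update y k (-1))))); auto.
    pose proof (zsum_nonneg 1 N _ (fun j => proj1 (proj2 Hy' j))).
    rewrite zsum_update in * by lia. lia.
  - replace y with (fun _ : Z => 0); [apply ImPlus0|].
    apply functional_extensionality. intros k. apply NNPP. eauto.
Qed.

Lemma cone_minus_ImMinus N z : 0 <= N -> cone_minus N z -> ImMinus a1 a2 z.
Proof.
  intros HN. remember (Z.to_nat (- zsum (- N) 0 z)) as m eqn:Hm. revert z Hm.
  induction m as [m IH] using (well_founded_induction lt_wf). intros z Hm Hz.
  destruct (classic (exists k0, z k0 <> 0)) as [Hnz|Hzero].
  - destruct (cone_minus_step N z HN Hz Hnz) as (i & k & Hk & Hz' & <-).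
    apply ImMinusE; [|lia|intros j Hj; apply (proj1 Hz'); lia].
    apply (IH (Z.to_nat (- zsum (- N) 0 (update z k 1)))); auto.
    pose proof (zsum_nonpos (- N) 0 _ (fun j => proj1 (proj2 Hz' j))).
    rewrite zsum_update in * by lia. lia.
  - replace z with (fun _ : Z => 0); [apply ImMinus0|].
    apply functional_extensionality. intros k. apply NNPP. eauto.
Qed.

Lemma SigmaSet_cone_plus x N : SigmaSet a1 a2 k1 k2 x -> supported N x ->
  cone_plus N (fun k => if 1 <=? k then x k else 0).
Proof.
  intros (_ & HA & _)%SigmaSet_cones Hs. split.
  - intros k Hk. destruct (Z.leb_spec 1 k); [apply Hs; lia | reflexivity].
  - intros j. unfold slopeA. destruct (Z.leb_spec 1 j); [|split; [lia | intros; lia]].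
    rewrite (proj2 (Z.leb_le 1 (j + 1))) by lia.
    rewrite <- (plus_p_nonpos_pos a1 a2 k1 k2 x j), <- (plus_p_nonpos_pos a1 a2 k1 k2 x (j + 1))
      by lia.
    destruct (HA j) as [? ?]. auto.
Qed.

Lemma SigmaSet_cone_minus x N : SigmaSet a1 a2 k1 k2 x -> supported N x ->
  cone_minus N (fun k => if k <=? 0 then x k else 0).
Proof.
  intros (_ & _ & HB)%SigmaSet_cones Hs. split.
  - intros k Hk. destruct (Z.leb_spec k 0); [apply Hs; lia | reflexivity].
  - intros j. unfold slopeB. destruct (Z.leb_spec j 0); [|split; [lia | intros; lia]].
    destruct (HB j) as [Hv HBj]. rewrite <- (minus_p_pos_nonpos a1 a2 k1 k2 x j) by lia.
    split; [auto | intros Hj].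
    rewrite (proj2 (Z.leb_le (j + 1) 0)), <- (minus_p_pos_nonpos a1 a2 k1 k2 x (j + 1)) by lia.
    auto.
Qed.

Lemma SigmaSet_ImPsi x : SigmaSet a1 a2 k1 k2 x -> ImPsi a1 a2 x.
Proof.
  intros Hx. pose proof Hx as ([N0 Hs0] & _)%SigmaSet_cones.
  assert (Hs : supported (Z.abs N0) x) by (intros k Hk; apply Hs0; lia).
  split.
  - exists (fun k => if 1 <=? k then x k else 0). split.
    + apply (cone_plus_ImPlus (Z.abs N0)), SigmaSet_cone_plus; auto.
    + intros k Hk. rewrite (proj2 (Z.leb_le 1 k)) by lia. reflexivity.
  - exists (fun k => if k <=? 0 then x k else 0). split.
    + apply (cone_minus_ImMinus (Z.abs N0)), SigmaSet_cone_minus; auto; lia.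
    + intros k Hk. rewrite (proj2 (Z.leb_le k 0)) by lia. reflexivity.
Qed.

End Crystal.

Theorem theorem3p2 (a1 a2 k1 k2 : Z) :
  standing_hyps a1 a2 k1 k2 ->
  (forall x : Z -> Z, SigmaSet a1 a2 k1 k2 x -> ImPsi a1 a2 x) /\
  (forall (x : Z -> Z) (N : Z) (i : idx),
     SigmaSet a1 a2 k1 k2 x -> (0 <= N)%Z -> supported N x ->
     (etildeZ a1 a2 (lam k1 k2) i N x = None \/
      exists y, etildeZ a1 a2 (lam k1 k2) i N x = Some y /\ SigmaSet a1 a2 k1 k2 y) /\
     (ftildeZ a1 a2 (lam k1 k2) i N x = None \/
      exists y, ftildeZ a1 a2 (lam k1 k2) i N x = Some y /\ SigmaSet a1 a2 k1 k2 y)).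
Proof.
  intros (a1_ge1 & a2_ge1 & a1a2_gt4 & _).
  split.
  - apply SigmaSet_ImPsi; auto.
  - intros x N i Hx HN Hs.
    split; [apply etildeZ_closed | apply ftildeZ_closed]; auto.
Qed.
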